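(* Let $X$ be a finite set, $F_X,F'_X$ filtrations over $X$ with facegrams $C_X,C'_X$. Then $$d_{\mathrm{B}}(\mathbf{mgm}(F_X),\mathbf{mgm}(F'_X))\leq d_\infty(\mathbf{mgm}^*(C_X),\mathbf{mgm}^*(C'_X))\leq d_{\mathrm{I}}(C_X,C'_X)=d_{\mathrm{I}}(F_X,F'_X).$$
   Context: $\mathbf{pow}(X)$: nonempty subsets of $X$. Filtration: order-preserving $F_X:(\mathbf{pow}(X),\subset)\to(\mathbb{R},\leq)$. Its facegram: $C_X(t)$ = inclusion-maximal elements of $\{\sigma\mid F_X(\sigma)\leq t\}$. Face-sets are ordered by $\mathcal{S}\leq\mathcal{S}'$ iff each member of $\mathcal{S}$ lies in a member of $\mathcal{S}'$. Lifespan $I_\sigma:=\{t\mid\sigma\in C_X(t)\}$, which is empty or of the form $[a,b)$, $a\in\mathbb{R}$, $b\in\mathbb{R}\cup\{\infty\}$. $\mathbf{mgm}$ is the multiset of nonempty lifespans (one per $\sigma$); $\mathbf{mgm}^*(C_X)=\{(\sigma,I_\sigma)\mid I_\sigma\neq\emptyset\}$. Bottleneck distance between multisets $A,B$ of intervals $[a,b)$: an $\varepsilon$-matching is a bijection $\varphi:A'\to B'$ between sub-multisets with $\max(|a-c|,|b-d|)\leq\varepsilon$ whenever $\varphi([a,b))=[c,d)$ (using $|\infty-\infty|=0$), and $|b-a|\leq2\varepsilon$ for every unmatched $[a,b)$; $d_{\mathrm{B}}(A,B)$ is the infimum of such $\varepsilon$. $d_\infty(\mathbf{mgm}^*(C_X),\mathbf{mgm}^*(C'_X)):=\max_{\sigma\in\mathbf{pow}(X)}d_{\mathrm{B}}(I^{C_X}_\sigma,I^{C'_X}_\sigma)$,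 each lifespan viewed as a multiset with zero or one interval. $d_{\mathrm{I}}(C_X,C'_X):=\inf\{\varepsilon\geq0\mid C_X(t)\leq C'_X(t+\varepsilon),\ C'_X(t)\leq C_X(t+\varepsilon)\ \forall t\}$; $d_{\mathrm{I}}(F_X,F'_X):=\max_{\sigma}|F_X(\sigma)-F'_X(\sigma)|$. *)

From HB Require Import structures.
From mathcomp Require Import all_boot all_order all_algebra.
From mathcomp Require Import boolp classical_sets reals constructive_ereal ereal.
Set Implicit Arguments. Unset Strict Implicit. Unset Printing Implicit Defensive.
Import Order.TTheory GRing.Theory Num.Theory.
Local Open Scope ring_scope.
Local Open Scope classical_set_scope.

Section Defs.
Variables (R : realType) (X : finType).

(* A filtration: order-preserving on nonempty subsets of X (values on set0
   are irrelevant and never used). *)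
Definition is_filtration (F : {set X} -> R) : Prop :=
  forall s t : {set X}, s != finset.set0 -> s \subset t -> F s <= F t.

Definition sublevel (F : {set X} -> R) (t : R) : {set {set X}} :=
  [set s : {set X} | (s != finset.set0) && (F s <= t)].

Definition facegram (F : {set X} -> R) (t : R) : {set {set X}} :=
  [set s in sublevel F t | [forall u in sublevel F t, ~~ (s \proper u)]].

Definition fs_le (S S' : {set {set X}}) : Prop :=
  forall s, s \in S -> exists2 u, u \in S' & s \subset u.

Definition lifespan (F : {set X} -> R) (s : {set X}) : set R :=
  [set t | s \in facegram F t].

End Defs.

(* intervals [a, b) with a real and b real or infinity (None = +infinity) *)
Definition itv (R : realType) := (R * option R)%type.

Definition itv_set (R : realType) (p : itv R) : set R :=
  [set t | p.1 <= t /\ (match p.2 with Some b => t < b | None => True end)].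

Definition lifespan_itv (R : realType) (X : finType) (F : {set X} -> R)
  (s : {set X}) : itv R :=
  xget (0, None) [set p : itv R | lifespan F s = itv_set p].

(* the lifespan viewed as a multiset with zero or one interval *)
Definition lifespan_ms (R : realType) (X : finType) (F : {set X} -> R)
  (s : {set X}) : seq (itv R) :=
  if pselect (lifespan F s !=set0) then [:: lifespan_itv F s] else [::].

Definition mgm (R : realType) (X : finType) (F : {set X} -> R) : seq (itv R) :=
  flatten [seq lifespan_ms F s | s <- enum [pred s : {set X} | s != finset.set0]].

(* right endpoints within eps, with |oo - oo| = 0 *)
Definition end_close (R : realType) (eps : R) (b d : option R) : Prop :=
  match b, d with
  | Some b, Some d => `|b - d| <= eps
  | None, None => True
  | _, _ => False
  end.

Definition itv_close (R : realType) (eps : R) (p q : itv R) : Prop :=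
  `|p.1 - q.1| <= eps /\ end_close eps p.2 q.2.

Definition itv_short (R : realType) (eps : R) (p : itv R) : Prop :=
  match p.2 with Some b => `|b - p.1| <= 2 * eps | None => False end.

(* eps-matching between multisets A and B (represented as sequences; the
   partial injection phi on indices is a bijection between sub-multisets) *)
Definition eps_matching (R : realType) (eps : R) (A B : seq (itv R)) : Prop :=
  exists phi : 'I_(size A) -> option 'I_(size B),
    (forall i j k, phi i = Some k -> phi j = Some k -> i = j) /\
    (forall i k, phi i = Some k ->
        itv_close eps (nth (0, None) A i) (nth (0, None) B k)) /\
    (forall i, phi i = None -> itv_short eps (nth (0, None) A i)) /\
    (forall k, (forall i, phi i <> Some k) -> itv_short eps (nth (0, None) B k)).

(* bottleneck distance (extended real; +oo if no matching exists) *)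
Definition d_B (R : realType) (A B : seq (itv R)) : \bar R :=
  ereal_inf [set e%:E | e in [set e : R | 0 <= e /\ eps_matching e A B]].

Definition d_inf (R : realType) (X : finType) (F F' : {set X} -> R) : \bar R :=
  \big[Order.max/0%E]_(s : {set X} | s != finset.set0)
     d_B (lifespan_ms F s) (lifespan_ms F' s).

Definition d_I_fg (R : realType) (X : finType) (F F' : {set X} -> R) : \bar R :=
  ereal_inf [set e%:E | e in [set e : R | 0 <= e /\
     (forall t : R, fs_le (facegram F t) (facegram F' (t + e)) /\
                    fs_le (facegram F' t) (facegram F (t + e)))]].

Definition d_I_filt (R : realType) (X : finType) (F F' : {set X} -> R) : R :=
  \big[Num.max/0]_(s : {set X} | s != finset.set0) `|F s - F' s|.

(* For a nonempty face s the lifespan is the interval [F s, b), where b is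
   the least value of F on a proper coface of s (b = oo if s has none); this
   holds for any function F, monotone or not.  Hence, when |F - F'| <= d on
   nonempty faces, the lifespans of s for F and F' are d-close intervals (the
   minimum over the same finite index set is 1-Lipschitz), and if only one
   of them is nonempty it has length at most 2d.  So every face has a
   d-matching of its lifespans, with d = d_I(F, F'); this gives
   d_inf <= d_I(F, F').  Gluing, face by face, near-optimal matchings of the
   lifespans yields matchings of the whole multisets mgm, whence
   d_B(mgm F, mgm F') <= d_inf.  Finally |F - F'| <= d makes the facegrams
   d-interleaved, and for filtrations any e-interleaving forces
   |F - F'| <= e, so d_I of the facegrams equals d_I of the filtrations.
   Matchings are handled through a nat-indexed reformulation that is stable
   under concatenation. *)

From HB Require Import structures.
From mathcomp Require Import all_boot all_order all_algebra.
From mathcomp Require Import boolp classical_sets reals constructive_ereal ereal.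
From mathcomp Require Import zify lra.
Import Order.TTheory GRing.Theory Num.Theory.
Local Open Scope ring_scope.
Set Implicit Arguments. Unset Strict Implicit.

Section Matchings.
Variable R : realType.
Notation nth0 := (nth ((0:R), @None R)).

(* An eps-matching presented with a partial map on natural-number indices,
   which is easier to glue than the ordinal-indexed one of [eps_matching]. *)
Definition nat_matching (e : R) (A B : seq (itv R)) :=
  exists f : nat -> option nat,
  [/\ (forall i k, (i < size A)%N -> f i = Some k ->
          (k < size B)%N /\ itv_close e (nth0 A i) (nth0 B k)),
      (forall i j k, (i < size A)%N -> (j < size A)%N ->
          f i = Some k -> f j = Some k -> i = j),
      (forall i, (i < size A)%N -> f i = None -> itv_short e (nth0 A i)) &
      (forall k, (k < size B)%N -> (forall i, (i < size A)%N -> f i <> Some k) ->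
          itv_short e (nth0 B k))].

Lemma insub_SomeK n (a : nat) (k : 'I_n) : insub a = Some k -> val k = a.
Proof. by case: insubP => // u _ <- [->]. Qed.

Lemma eps_matchingE (e : R) A B : eps_matching e A B <-> nat_matching e A B.
Proof.
split.
- case=> phi [inj_phi [close_phi [short_A short_B]]].
  pose f n := if (insub n : option 'I_(size A)) is Some i then omap val (phi i)
              else None.
  have fE (i : 'I_(size A)) : f (val i) = omap val (phi i) by rewrite /f valK.
  exists f; split.
  + move=> i k Hi; rewrite -[i]/(val (Ordinal Hi)) fE.
    case E: (phi _) => [k'|] //= [<-]; split; [exact: ltn_ord | exact: close_phi E].
  + move=> i j k Hi Hj; rewrite -[i]/(val (Ordinal Hi)) -[j]/(val (Ordinal Hj)) !fE.
    case Ei: (phi _) => [a|] //= [<-]; case Ej: (phi _) => [b|] //= [/val_inj ab].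
    by rewrite ab in Ej; case: (inj_phi _ _ _ Ei Ej).
  + move=> i Hi; rewrite -[i]/(val (Ordinal Hi)) fE.
    by case Ei: (phi _) => //= _; exact: short_A Ei.
  + move=> k Hk unmatched; apply: (short_B (Ordinal Hk)) => i Ei.
    by apply: (unmatched _ (ltn_ord i)); rewrite fE Ei.
- case=> f [close_f inj_f short_A short_B].
  exists (fun i : 'I_(size A) => if f (val i) is Some k then insub k else None).
  split; [|split; [|split]].
  + move=> i j k; case Ei: (f (val i)) => [a|] // Ha.
    case Ej: (f (val j)) => [b|] // Hb; apply: val_inj.
    apply: (inj_f _ _ a (ltn_ord i) (ltn_ord j) Ei).
    by rewrite Ej -(insub_SomeK Hb) (insub_SomeK Ha).
  + move=> i k; case Ei: (f (val i)) => [a|] // Ha.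
    by have := close_f _ _ (ltn_ord i) Ei; rewrite -(insub_SomeK Ha) => -[].
  + move=> i; case Ei: (f (val i)) => [a|]; last first.
      by move=> _; exact: short_A (ltn_ord i) Ei.
    have [Ha _] := close_f _ _ (ltn_ord i) Ei.
    by rewrite (insubT (fun x => x < size B)%N Ha).
  + move=> k unmatched; apply: short_B (ltn_ord k) _ => i Hi Ei.
    apply: (unmatched (Ordinal Hi)) => /=.
    rewrite Ei (insubT (fun x => x < size B)%N (ltn_ord k)).
    by congr Some; apply: val_inj.
Qed.

Lemma itv_close_mono (e e' : R) (p q : itv R) :
  e <= e' -> itv_close e p q -> itv_close e' p q.
Proof.
move=> ee' [close1 close2]; split; first exact: le_trans ee'.
by move: close2; case: p.2 => [b|]; case: q.2 => [c|] //= h; apply: le_trans ee'.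
Qed.

Lemma itv_short_mono (e e' : R) (p : itv R) :
  e <= e' -> itv_short e p -> itv_short e' p.
Proof.
move=> ee'; rewrite /itv_short; case: p.2 => [b|] // h.
by apply: le_trans h _; rewrite ler_pM2l.
Qed.

Lemma nat_matching_mono (e e' : R) A B :
  e <= e' -> nat_matching e A B -> nat_matching e' A B.
Proof.
move=> ee' [f [close_f inj_f short_A short_B]]; exists f; split => //.
- move=> i k Hi Ei; have [Hk close_ik] := close_f _ _ Hi Ei.
  by split; last exact: itv_close_mono ee' close_ik.
- by move=> i Hi Ei; apply: itv_short_mono ee' _; exact: short_A.
- by move=> k Hk unmatched; apply: itv_short_mono ee' _; exact: short_B.
Qed.

Lemma nat_matching_nil (e : R) : nat_matching e [::] [::].
Proof. by exists (fun _ => None); split. Qed.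

Lemma nat_matching_cat (e : R) A B A' B' :
  nat_matching e A B -> nat_matching e A' B' -> nat_matching e (A ++ A') (B ++ B').
Proof.
case=> f [close_f inj_f short_A short_B] [g [close_g inj_g short_A' short_B']].
exists (fun n => if (n < size A)%N then f n else omap (addn (size B)) (g (n - size A)%N)).
rewrite !size_cat; split.
- move=> i k Hi; case: ifP => Ai.
    move=> Ei; have [Hk close_ik] := close_f _ _ Ai Ei.
    by rewrite !nth_cat Ai Hk; split => //; lia.
  case Eg: (g _) => [a|] //= [<-].
  have Ai' : (i - size A < size A')%N by lia.
  have [Ha close_ia] := close_g _ _ Ai' Eg; split; first lia.
  rewrite !nth_cat Ai; have -> : (size B + a < size B)%N = false by lia.
  by rewrite addKn.
- move=> i j k Hi Hj; case: ifP => Ai; case: ifP => Aj.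
  + exact: inj_f.
  + move=> Ei; case: (g _) => [a|] //= [Ek]; have := close_f _ _ Ai Ei; lia.
  + case: (g _) => [a|] //= [Ek] Ej; have := close_f _ _ Aj Ej; lia.
  + case Eg: (g (i - _)%N) => [a|] //= [Ek]; case Eg': (g (j - _)%N) => [b|] //= [Ek'].
    have ab : a = b by lia.
    have Ai' : (i - size A < size A')%N by lia.
    have Aj' : (j - size A < size A')%N by lia.
    rewrite ab in Eg; have := inj_g _ _ b Ai' Aj' Eg Eg'; lia.
- move=> i Hi; rewrite nth_cat; case: ifP => Ai; first exact: short_A.
  by case Eg: (g _) => [a|] //= _; apply: short_A' Eg; lia.
- move=> k Hk unmatched; rewrite nth_cat; case: ifP => Bk.
    apply: short_B Bk _ => i Hi Ei; apply: (unmatched i); first lia.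
    by rewrite Hi.
  apply: short_B'; first by rewrite ltn_subLR // leqNgt Bk.
  move=> i Hi Ei; apply: (unmatched (size A + i)); first lia.
  have -> : (size A + i < size A)%N = false by lia.
  by rewrite addKn Ei /=; congr Some; rewrite subnKC // leqNgt Bk.
Qed.

Lemma nat_matching_flatten (T : eqType) (e : R) (f g : T -> seq (itv R)) (l : seq T) :
  (forall x, x \in l -> nat_matching e (f x) (g x)) ->
  nat_matching e (flatten (map f l)) (flatten (map g l)).
Proof.
elim: l => [|x l IH] fg /=; first exact: nat_matching_nil.
apply: nat_matching_cat; first by apply: fg; rewrite inE eqxx.
by apply: IH => y yl; apply: fg; rewrite inE yl orbT.
Qed.

End Matchings.

Section FiniteMinimum.
Variables (R : realType) (I : finType) (P : {pred I}).

(* The minimum of [f] over the finite index set [P], or [None] when [P] is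
   empty; it encodes the right end [b] of an interval [a, b), [None] = oo. *)
Definition fmin (f : I -> R) : option R :=
  if [pick i in P] is Some i0 then Some (f (Order.arg_min i0 P f)) else None.

Variant fmin_spec (f : I -> R) : option R -> Prop :=
  | FminNone of (forall i, i \notin P) : fmin_spec f None
  | FminSome i of i \in P & (forall j, j \in P -> f i <= f j) :
      fmin_spec f (Some (f i)).

Lemma fminP (f : I -> R) : fmin_spec f (fmin f).
Proof.
rewrite /fmin; case: pickP => [i0 Pi0 | P0]; last by constructor => i; rewrite P0.
by case: (arg_minP f Pi0) => i Pi min_i; constructor.
Qed.

(* Minima of two [d]-close functions are [d]-close (both infinite or both
   finite and within [d]); this bounds the right ends of lifespans. *)
Lemma fmin_close (f g : I -> R) (d : R) :
  (forall i, i \in P -> `|f i - g i| <= d) -> end_close d (fmin f) (fmin g).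
Proof.
move=> fg; case: fminP => [P0 | i Pi min_f]; case: fminP => [Q0 | j Pj min_g] //=.
- by have := P0 j; rewrite Pj.
- by have := Q0 i; rewrite Pi.
have := fg i Pi; have := fg j Pj; have := min_f j Pj; have := min_g i Pi.
rewrite !ler_norml; lra.
Qed.

End FiniteMinimum.

Section Intervals.
Variable R : realType.

Lemma itv_set_left (p : itv R) : (itv_set p !=set0)%classic -> itv_set p p.1.
Proof.
case: p => a [b|] [t /= [le_at lt_tb]]; split => //=; exact: le_lt_trans le_at lt_tb.
Qed.

Lemma itv_set_inj (p q : itv R) :
  (itv_set p !=set0)%classic -> itv_set p = itv_set q -> p = q.
Proof.
move=> p0 pq; have q0 : (itv_set q !=set0)%classic by rewrite -pq.
have pL := itv_set_left p0; have qL := itv_set_left q0.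
have memE t : itv_set p t <-> itv_set q t by rewrite pq.
move: p q pq p0 q0 pL qL memE => [a b] [a' b'] _ _ _ pL qL memE.
have aa' : a = a'.
  by apply/le_anti/andP; split; [case: ((memE a').2 qL) | case: ((memE a).1 pL)].
subst a'; case: pL qL => _ ab [_ ab'] /=; congr pair.
case: b b' ab ab' memE => [b|] [b'|] //= ab ab' memE.
- congr Some; apply/le_anti/andP; split; rewrite leNgt; apply/negP => lt.
  + by have [_] := (memE b').1 (conj (ltW ab') lt); rewrite ltxx.
  + by have [_] := (memE b).2 (conj (ltW ab) lt); rewrite ltxx.
- by have [_] := (memE b).2 (conj (ltW ab) I); rewrite ltxx.
- by have [_] := (memE b').1 (conj (ltW ab') I); rewrite ltxx.
Qed.

End Intervals.

Lemma proper_neq0 (X : finType) (s u : {set X}) : s \proper u -> u != finset.set0.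
Proof.
by case/properP => _ [x xu _]; apply/set0Pn; exists x.
Qed.

Section Facegram.
Variables (R : realType) (X : finType) (F : {set X} -> R).

Lemma mem_facegram (t : R) (s : {set X}) : s != finset.set0 ->
  s \in facegram F t <-> F s <= t /\ (forall u : {set X}, s \proper u -> t < F u).
Proof.
move=> s0; rewrite /facegram /sublevel !inE s0 /=; split.
- case/andP=> Fs /forallP maxs; split => // u su; rewrite ltNge; apply/negP => Fu.
  by have := maxs u; rewrite !inE (proper_neq0 su) Fu su.
- case=> Fs maxs; rewrite Fs /=; apply/forallP => u; rewrite !inE.
  apply/implyP => /andP[_ Fu]; apply/negP => su.
  by have := maxs u su; rewrite ltNge Fu.
Qed.

Lemma facegram_cover (t : R) (s : {set X}) : s \in sublevel F t ->
  exists2 u, u \in facegram F t & s \subset u.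
Proof.
move=> st; pose P := [pred u | (u \in sublevel F t) && (s \subset u)].
have Ps : P s by rewrite /= st subxx.
case: (arg_maxnP (fun u : {set X} => #|u|) Ps) => u /andP[ut su] max_u.
exists u => //; rewrite inE ut /=; apply/forallP => v; apply/implyP => vt.
apply/negP => uv; have := max_u v.
rewrite /= vt (fintype.subset_trans su (proper_sub uv)) => /(_ isT).
by rewrite leqNgt (proper_card uv).
Qed.

Definition coface_end (s : {set X}) : option R :=
  fmin [pred u : {set X} | s \proper u] F.

Lemma lifespan_eq (s : {set X}) : s != finset.set0 ->
  lifespan F s = itv_set (F s, coface_end s).
Proof.
move=> s0; apply/funext => t; apply/propext; rewrite /lifespan /itv_set /=.
rewrite mem_facegram //; apply: and_iff_compat_l; rewrite /coface_end.
case: fminP => [none | u su min_u].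
- by split=> // _ u su; have := none u; rewrite inE su.
- split=> [lt_t | lt_t v sv]; first by apply: lt_t; rewrite inE in su.
  by apply: lt_le_trans lt_t (min_u v _); rewrite inE.
Qed.

Lemma lifespan_itv_eq (s : {set X}) : s != finset.set0 ->
  (lifespan F s !=set0)%classic -> lifespan_itv F s = (F s, coface_end s).
Proof.
move=> s0 ne; have E := lifespan_eq s0.
have E' : lifespan F s = itv_set (lifespan_itv F s) :=
  (xgetI (0, None) (P := [set p : itv R | lifespan F s = itv_set p]) E).
by apply: itv_set_inj; rewrite -E' // E.
Qed.

End Facegram.

Section LifespanMatching.
Variables (R : realType) (X : finType) (F F' : {set X} -> R) (d : R).

Hypothesis close : forall s, s != finset.set0 -> `|F s - F' s| <= d.

Lemma coface_end_close (s : {set X}) :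
  end_close d (coface_end F s) (coface_end F' s).
Proof. by apply: fmin_close => u; rewrite inE => /proper_neq0; apply: close. Qed.

Lemma lifespan_itv_close (s : {set X}) : s != finset.set0 ->
  (lifespan F s !=set0)%classic -> (lifespan F' s !=set0)%classic ->
  itv_close d (lifespan_itv F s) (lifespan_itv F' s).
Proof.
move=> s0 ne ne'; rewrite !lifespan_itv_eq //.
by split; [exact: close | exact: coface_end_close].
Qed.

(* If the face is born and dies in the same instant for F', then its
   lifespan for F has length at most 2d: with [u] the coface killing it for
   F', F s >= F' s - d >= F' u - d >= F u - 2d >= coface_end F s - 2d. *)
Lemma lifespan_itv_short (s : {set X}) : s != finset.set0 ->
  (lifespan F s !=set0)%classic -> ~ (lifespan F' s !=set0)%classic ->
  itv_short d (lifespan_itv F s).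
Proof.
move=> s0 ne ne'; rewrite lifespan_itv_eq // /itv_short /=.
move: ne ne'; rewrite !lifespan_eq // /coface_end.
case: (fminP _ F) => [none | u su min_u]; case: (fminP _ F') => [none' | v sv _].
- by move=> _ []; exists (F' s); split.
- by have := none v; rewrite sv.
- by have := none' u; rewrite su.
move=> [t [Fs_t t_Fu]] dead'.
have Fv_Fs : F' v <= F' s.
  by rewrite leNgt; apply/negP => lt; apply: dead'; exists (F' s); split.
have Fs_Fu : F s < F u := le_lt_trans Fs_t t_Fu.
rewrite /= ger0_norm ?subr_ge0 ?(ltW Fs_Fu) //.
have := min_u v sv; rewrite inE in sv.
have := close s0; have := close (proper_neq0 sv); rewrite !ler_norml; lra.
Qed.

End LifespanMatching.

Lemma lifespan_ms_matching (R : realType) (X : finType) (F F' : {set X} -> R)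
    (d : R) :
  (forall s, s != finset.set0 -> `|F s - F' s| <= d) ->
  forall s, s != finset.set0 -> nat_matching d (lifespan_ms F s) (lifespan_ms F' s).
Proof.
move=> close s s0.
have close' u : u != finset.set0 -> `|F' u - F u| <= d.
  by rewrite distrC; apply: close.
rewrite /lifespan_ms; case: pselect => ne; case: pselect => ne'.
- exists (fun _ => Some 0%N); split => //= [i k|i j k|k].
  + by rewrite ltnS leqn0 => /eqP -> [<-]; split => //; exact: lifespan_itv_close.
  + by rewrite !ltnS !leqn0 => /eqP -> /eqP ->.
  + by rewrite ltnS leqn0 => /eqP -> /(_ 0%N erefl).
- exists (fun _ => None); split => //= i; rewrite ltnS leqn0 => /eqP -> _.
  exact: (lifespan_itv_short close s0 ne ne').
- exists (fun _ => None); split => //= k; rewrite ltnS leqn0 => /eqP -> _.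
  exact: (lifespan_itv_short close' s0 ne' ne).
- by exists (fun _ => None); split.
Qed.

Section Interleaving.
Variables (R : realType) (X : finType) (F G : {set X} -> R) (e : R).

(* If G is below F + e, every face maximal for F at time t has entered G by
   t + e, so it lies in a face maximal for G at time t + e. *)
Lemma facegram_interleave : (forall s, s != finset.set0 -> G s <= F s + e) ->
  forall t, fs_le (facegram F t) (facegram G (t + e)).
Proof.
move=> GF t s; rewrite inE => /andP[+ _]; rewrite !inE => /andP[s0 Fs].
by apply: facegram_cover; rewrite inE s0 (le_trans (GF s s0)) ?lerD2r.
Qed.

(* Conversely an interleaving bounds F by G + e: a face s lies in a maximal
   face u of G at time G s, which lies in a maximal face v of F at time
   G s + e, and F s <= F v by monotonicity. *)
Lemma interleave_bound : is_filtration F ->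
  (forall t, fs_le (facegram G t) (facegram F (t + e))) ->
  forall s, s != finset.set0 -> F s <= G s + e.
Proof.
move=> filtF GF s s0.
have [u uG su] : exists2 u, u \in facegram G (G s) & s \subset u.
  by apply: facegram_cover; rewrite inE s0 lexx.
have [v vF uv] := GF _ u uG.
move: vF; rewrite !inE => /andP[/andP[_ Fv] _].
exact: le_trans (filtF s v s0 (fintype.subset_trans su uv)) Fv.
Qed.

End Interleaving.

Section Distances.
Variables (R : realType) (X : finType).

Lemma d_B_le (A B : seq (itv R)) (e : R) :
  0 <= e -> nat_matching e A B -> (d_B A B <= e%:E)%E.
Proof.
move=> e0 AB; apply: ereal_inf_lbound; exists e => //.
by split => //; apply/eps_matchingE.
Qed.

Lemma d_B_lt (A B : seq (itv R)) (e : R) :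
  (d_B A B < e%:E)%E -> nat_matching e A B.
Proof.
case/ereal_inf_lt => _ [e' [e'0 AB] <-]; rewrite lte_fin => /ltW e'e.
by apply: nat_matching_mono e'e _; apply/eps_matchingE.
Qed.

Variables (F F' : {set X} -> R).

Lemma d_I_filt_ge0 : 0 <= d_I_filt F F'.
Proof. exact: bigmax_ge_id. Qed.

Lemma d_I_filt_close s : s != finset.set0 -> `|F s - F' s| <= d_I_filt F F'.
Proof. by move=> s0; rewrite /d_I_filt; apply: le_bigmax_cond. Qed.

Lemma d_inf_ge0 : (0 <= d_inf F F')%E.
Proof. by rewrite /d_inf; apply: bigmax_ge_id. Qed.

Lemma d_inf_le_d_I_filt : (d_inf F F' <= (d_I_filt F F')%:E)%E.
Proof.
apply: bigmax_le => [|s s0]; first by rewrite lee_fin d_I_filt_ge0.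
apply: d_B_le; first exact: d_I_filt_ge0.
exact: lifespan_ms_matching d_I_filt_close _ s0.
Qed.

(* Gluing near-optimal per-face matchings gives matchings of the whole
   multisets; d_inf is finite since it is bounded by d_I_filt. *)
Lemma d_B_mgm_le_d_inf : (d_B (mgm F) (mgm F') <= d_inf F F')%E.
Proof.
have [D DE] : exists D : R, d_inf F F' = D%:E.
  move: d_inf_ge0 d_inf_le_d_I_filt.
  by case: (d_inf F F') => [D||] //; exists D.
have D0 : 0 <= D by rewrite -lee_fin -DE; exact: d_inf_ge0.
rewrite DE; apply/lee_addgt0Pr => eps eps0; rewrite -EFinD.
apply: d_B_le; first lra.
apply: nat_matching_flatten => s; rewrite mem_enum => s0; apply: d_B_lt.
apply: le_lt_trans (_ : (D%:E < (D + eps)%:E)%E); last by rewrite lte_fin; lra.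
by rewrite -DE; apply: le_bigmax_cond.
Qed.

Lemma d_I_fg_eq : is_filtration F -> is_filtration F' ->
  d_I_fg F F' = (d_I_filt F F')%:E.
Proof.
move=> filtF filtF'; set d := d_I_filt F F'.
have upper s : s != finset.set0 -> F' s <= F s + d.
  by move=> s0; have := d_I_filt_close s0; rewrite -/d ler_norml; lra.
have lower s : s != finset.set0 -> F s <= F' s + d.
  by move=> s0; have := d_I_filt_close s0; rewrite -/d ler_norml; lra.
apply/le_anti/andP; split.
  apply: ereal_inf_lbound; exists d => //; split; first exact: d_I_filt_ge0.
  by move=> t; split; apply: facegram_interleave.
apply: le_ereal_inf_tmp => _ [e [e0 inter] <-]; rewrite lee_fin.
apply: bigmax_le => // s s0.
have := interleave_bound filtF (fun t => (inter t).2) s0.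
have := interleave_bound filtF' (fun t => (inter t).1) s0.
rewrite ler_norml; lra.
Qed.

End Distances.

Unset Implicit Arguments. Set Strict Implicit.

Theorem mainTheorem15 (R : realType) (X : finType) (F F' : {set X} -> R) :
  is_filtration F -> is_filtration F' ->
  [/\ (d_B (mgm F) (mgm F') <= d_inf F F')%E,
      (d_inf F F' <= d_I_fg F F')%E &
      d_I_fg F F' = (d_I_filt F F')%:E].
Proof.
move=> filtF filtF'; have d_I_eq := d_I_fg_eq filtF filtF'.
split => //; first exact: d_B_mgm_le_d_inf.
by rewrite d_I_eq; exact: d_inf_le_d_I_filt.
Qed.
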